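(* Let $a\ge 2$, $n=2^a$, and let $\mathcal{S}$ be a normalized unitary-weight single-symbol decodable STBC of maximal rate, i.e. with $k=2a$ complex symbols and weight matrices $A_{1I}=I_n, A_{1Q}, A_{iI}, A_{iQ}$ ($2\le i\le 2a$). Then $$A_{1Q}=A_{1Q}^H\ (\text{equivalently } A_{1Q}^2=I_n),\qquad A_{iI}A_{1Q}=A_{1Q}A_{iI},\qquad A_{iQ}=\pm A_{iI}A_{1Q}$$ for $i=2,3,\dots,2a$.
   Context: A linear square STBC with $k$ complex symbols is given by $2k$ weight matrices $A_{iI},A_{iQ}\in\mathbb{C}^{n\times n}$ ($1\le i\le k$), linearly independent over $\mathbb{R}$, with codewords $S=\sum_{i=1}^k(x_{iI}A_{iI}+x_{iQ}A_{iQ})$. It is a unitary-weight single-symbol decodable (SSD) code if: (i) $A_{iI}^HA_{iI}=A_{iQ}^HA_{iQ}=I_n$ for all $i$; (ii) for all $1\le i\ne j\le k$: $A_{iI}^HA_{jQ}+A_{jQ}^HA_{iI}=O_n$, $A_{iI}^HA_{jI}+A_{jI}^HA_{iI}=O_n$, $A_{iQ}^HA_{jQ}+A_{jQ}^HA_{iQ}=O_n$; and (iii) it is not the case that $A_{iI}^HA_{iQ}+A_{iQ}^HA_{iI}=O_n$ for all $i$. It is normalized if $A_{1I}=I_n$. For $n=2^a$ the rate of such a code is at most $2a/2^a$, so maximal rate means $k=2a$. *)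

(* Complex scalars: an arbitrary numClosedFieldType C
   (e.g. algC, or complex R for a real closed field R), with Num.conj. *)
From HB Require Import structures.
From mathcomp Require Import all_boot all_order all_algebra.
Set Implicit Arguments. Unset Strict Implicit. Unset Printing Implicit Defensive.
Import Order.TTheory GRing.Theory Num.Theory.
Local Open Scope ring_scope.

Definition hermT (C : numClosedFieldType) (n : nat) (A : 'M[C]_n) : 'M[C]_n :=
  (map_mx Num.conj A)^T.

Definition real_lin_indep (C : numClosedFieldType) (n k : nat)
    (AI AQ : 'I_k -> 'M[C]_n) : Prop :=
  forall cI cQ : 'I_k -> C,
    (forall i, cI i \is Num.real) -> (forall i, cQ i \is Num.real) ->
    \sum_(i < k) (cI i *: AI i + cQ i *: AQ i) = 0 ->
    forall i, cI i = 0 /\ cQ i = 0.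

Definition unitary_weight_SSD (C : numClosedFieldType) (n k : nat)
    (AI AQ : 'I_k -> 'M[C]_n) : Prop :=
  [/\ real_lin_indep AI AQ,
      (forall i, hermT (AI i) *m AI i = 1%:M /\ hermT (AQ i) *m AQ i = 1%:M),
      (forall i j, i != j ->
         [/\ hermT (AI i) *m AQ j + hermT (AQ j) *m AI i = 0,
             hermT (AI i) *m AI j + hermT (AI j) *m AI i = 0 &
             hermT (AQ i) *m AQ j + hermT (AQ j) *m AQ i = 0]) &
      ~ (forall i, hermT (AI i) *m AQ i + hermT (AQ i) *m AI i = 0)].

(* Normalized: A_{1I} = I_n, where symbol 1 is the index with value 0. *)
Definition normalized (C : numClosedFieldType) (n k : nat)
    (AI : 'I_k -> 'M[C]_n) : Prop :=
  forall i : 'I_k, nat_of_ord i = 0%N -> AI i = 1%:M.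

From HB Require Import structures.
From mathcomp Require Import all_boot all_order all_algebra.
From mathcomp Require Import spectral ring zify.
Set Implicit Arguments. Unset Strict Implicit. Unset Printing Implicit Defensive.
Import Order.TTheory GRing.Theory Num.Theory.
Local Open Scope ring_scope.

(* Write X_l = A_{lI}, Y_l = A_{lQ} and B = A_{1Q}.  Since A_{1I} = I, the SSD
   relations say that, for l, m >= 2, the X_l and Y_l are skew-Hermitian square
   roots of -I, that X_l, X_m, Y_l, Y_m anticommute pairwise except for the pairs
   {X_l, Y_l}, and that B^H X_l = X_l B and B^H Y_l = Y_l B.

   Everything rests on a Hurwitz-Radon count: if g_1, ..., g_2m are pairwise
   anticommuting square roots of -I in dimension r, the traces of g_S^-1 g_T
   (S <> T) vanish, so the 2^2m monomials g_S are linearly independent; hence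
   2^2m <= r^2, and when equality holds only scalars commute with all g_i.

   If B <> B^H, a multiple U of D = B - B^H squares to -I on an eigenspace of D^2
   and anticommutes there with X_2, ..., X_2a; by the count that eigenspace is
   everything, so U^2 = -I.  Then U, X_2, ..., X_2a is a maximal Clifford system,
   each Y_m + s X_m anticommuting with all of it for a suitable s is a nonzero
   multiple of the inverse of its volume element, and two such multiples cannot
   anticommute.  So B = B^H, B^2 = I, and B commutes with every X_l, Y_l.  On each
   eigenspace of B the 2a - 2 matrices X_l (l <> 1, j) act, so both eigenspaces
   have dimension 2^(a-1) and X_j Y_j, which commutes with them, is p + q B.
   Then Y_j = -X_j (p + q B), and Y_j^2 = -I leaves only Y_j = +- X_j B. *)

Definition anticomm_mx (R : pzRingType) n (P Q : 'M[R]_n) := P *m Q = - (Q *m P).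

Lemma anticomm_mxC (R : pzRingType) n (P Q : 'M[R]_n) :
  anticomm_mx P Q -> anticomm_mx Q P.
Proof. by rewrite /anticomm_mx => ->; rewrite opprK. Qed.

Lemma anticomm_mx_comm (R : pzRingType) n (G P Q : 'M[R]_n) :
  anticomm_mx G P -> anticomm_mx G Q -> comm_mx G (P *m Q).
Proof. by move=> GP GQ; rewrite /comm_mx mulmxA GP mulNmx -mulmxA GQ mulmxN opprK mulmxA. Qed.

Lemma anticomm_mxZ (R : comPzRingType) n (P Q : 'M[R]_n) (s : R) :
  anticomm_mx P Q -> anticomm_mx (s *: P) Q.
Proof. by move=> PQ; rewrite /anticomm_mx -scalemxAl -scalemxAr PQ scalerN. Qed.

Lemma anticomm_mxDZ (R : comPzRingType) n (G P Q : 'M[R]_n) (s : R) :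
  anticomm_mx G P -> anticomm_mx G Q -> anticomm_mx G (P + s *: Q).
Proof.
by move=> GP GQ; rewrite /anticomm_mx mulmxDr mulmxDl -scalemxAr -scalemxAl GP GQ scalerN opprD.
Qed.

Lemma mxtrace_anticomm0 (F : numFieldType) n (G K : 'M[F]_n) :
  G \in unitmx -> anticomm_mx G K -> \tr K = 0.
Proof.
move=> uG GK; have trN : \tr K = - \tr K.
  by rewrite -{1}(mulKmx uG K) GK mulmxN linearN /= mxtrace_mulC -mulmxA mulmxV // mulmx1.
by apply/eqP; rewrite -[_ == 0](mulrn_eq0 _ 2) mulr2n {1}trN addNr.
Qed.

(** * Anticommuting square roots of -1 *)

Section CliffordMonomials.
Variables (F : numFieldType) (r k : nat) (g : 'I_k -> 'M[F]_r) (A : {set 'I_k}).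
Hypothesis g_sqr : forall i, i \in A -> g i *m g i = - 1%:M.
Hypothesis g_anticomm :
  forall i j, i \in A -> j \in A -> i != j -> anticomm_mx (g i) (g j).

Implicit Types S T : {set 'I_k}.

Definition gprod_seq (s : seq 'I_k) := foldr (fun i M => g i *m M) 1%:M s.
Definition gprod (S : {set 'I_k}) := gprod_seq (enum S).
Definition gsign i (S : {set 'I_k}) : F := (-1) ^+ (odd #|S| (+) (i \in S)).

Lemma gprod_seq_comm i s : i \in A -> all (mem A) s ->
  g i *m gprod_seq s = (-1) ^+ count (predC1 i) s *: (gprod_seq s *m g i).
Proof.
move=> iA; elim: s => [|j s IHs] /=; first by rewrite scale1r mulmx1 mul1mx.
case/andP=> jA sA; rewrite mulmxA.
have [->|ji] := eqVneq j i.
  by rewrite add0n -mulmxA [in LHS]IHs // -scalemxAr mulmxA.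
rewrite g_anticomm 1?eq_sym // mulNmx -[g j *m g i *m _]mulmxA IHs //.
by rewrite -scalemxAr mulmxA /= add1n exprS mulN1r scaleNr.
Qed.

Lemma gprod_comm i S : i \in A -> S \subset A ->
  g i *m gprod S = gsign i S *: (gprod S *m g i).
Proof.
move=> iA SA; rewrite /gprod gprod_seq_comm //; last first.
  by apply/allP => x; rewrite mem_enum; apply: (subsetP SA).
rewrite /gsign -signr_odd; congr (_ ^+ _ *: _).
have := count_predC (pred1 i) (enum S).
rewrite -cardE count_uniq_mem ?enum_uniq // mem_enum.
by move=> <-; rewrite oddD oddb addbC addbA addbb.
Qed.

Lemma g_unitmx i : i \in A -> g i \in unitmx.
Proof. by move=> iA; case: (@mulmx1_unit _ _ (g i) (- g i)); rewrite // mulmxN g_sqr // opprK. Qed.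

Lemma gprod_unitmx S : S \subset A -> gprod S \in unitmx.
Proof.
move=> SA; rewrite /gprod; have : all (mem A) (enum S).
  by apply/allP => x; rewrite mem_enum; apply: (subsetP SA).
elim: (enum S) => [|j s IHs] /=; first by rewrite unitmx1.
by case/andP=> jA sA; rewrite unitmx_mul g_unitmx // IHs.
Qed.

Lemma gsign_sqr i S : gsign i S * gsign i S = 1.
Proof. by rewrite -expr2 sqrr_sign. Qed.

Lemma invmx_gprod_comm i T : i \in A -> T \subset A ->
  g i *m invmx (gprod T) = gsign i T *: (invmx (gprod T) *m g i).
Proof.
move=> iA TA; have uT := gprod_unitmx TA.
have e : invmx (gprod T) *m g i = gsign i T *: (g i *m invmx (gprod T)).
  rewrite -[LHS](mulmxK uT) -(mulmxA _ (g i)) gprod_comm // -scalemxAr -scalemxAl.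
  by rewrite mulmxA mulVmx // mul1mx.
by rewrite e scalerA gsign_sqr scale1r.
Qed.

Hypothesis A_even : ~~ odd #|A|.

Lemma gsign_separates S T : S \subset A -> T \subset A -> S != T ->
  exists2 i, i \in A & gsign i S = - gsign i T.
Proof.
move=> SA TA neST.
suff [i iA sep_i] : exists2 i, i \in A &
    (odd #|S| (+) (i \in S)) != (odd #|T| (+) (i \in T)).
  exists i => //; rewrite /gsign; move: sep_i.
  by move: (odd #|S| (+) _) (odd #|T| (+) _) => [] [] //= _;
    rewrite expr1 expr0 ?opprK.
have [eST|nST] := eqVneq (odd #|S|) (odd #|T|).
  have /existsP [i] : [exists i, (i \in S) != (i \in T)].
    by apply: contraR neST => /existsPn eqST; apply/eqP/setP => i; apply/eqP/negbNE.
  move=> hi; exists i; last by rewrite eST; move: hi; case: (i \in S) (i \in T) (odd #|T|) => [] [] [].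
  have : (i \in S) || (i \in T) by move: hi; case: (i \in S) (i \in T) => [] [].
  by case/orP => [/(subsetP SA) | /(subsetP TA)].
(* otherwise T = A :\: S, which has the parity of S because #|A| is even *)
have /existsP [i /andP [iA /eqP hi]] : [exists i, (i \in A) && ((i \in S) == (i \in T))].
  apply: contraR nST => /existsPn none.
  have -> : T = A :\: S.
    apply/setP => x; rewrite !inE; have := none x; case xA: (x \in A); last first.
      by move=> _; rewrite andbF; apply: contraFF xA; apply: (subsetP TA).
    by rewrite andbT; case: (x \in S); case: (x \in T).
  by rewrite cardsD (setIidPr SA) oddB ?subset_leq_card // (negbTE A_even); case: odd.
by exists i => //; rewrite hi; move: nST; case: (i \in T) (odd #|S|) (odd #|T|) => [] [] [].
Qed.

Lemma mxtrace_gprod_ratio S T : S \subset A -> T \subset A -> S != T ->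
  \tr (invmx (gprod T) *m gprod S) = 0.
Proof.
move=> SA TA neST; have [i iA sepi] := gsign_separates SA TA neST.
apply: (mxtrace_anticomm0 (g_unitmx iA)).
rewrite /anticomm_mx mulmxA invmx_gprod_comm // -scalemxAl -mulmxA gprod_comm // sepi.
by rewrite -scalemxAr scalerA mulrN gsign_sqr scaleN1r mulmxA.
Qed.

Definition gprod_mx : 'M[F]_(#|powerset A|, r * r) :=
  \matrix_t mxvec (gprod (enum_val t)).

Lemma enum_val_powerset_sub (t : 'I_#|powerset A|) : enum_val t \subset A.
Proof. by rewrite -powersetE enum_valP. Qed.

Lemma mulmx_gprod_mx (w : 'rV_#|powerset A|) :
  w *m gprod_mx = mxvec (\sum_t w 0 t *: gprod (enum_val t)).
Proof.
by rewrite mulmx_sum_row linear_sum; apply: eq_bigr => t _; rewrite rowK linearZ.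
Qed.

Lemma mxtrace_gprod_coord (c : 'I_#|powerset A| -> F) t :
  \tr (invmx (gprod (enum_val t)) *m \sum_u c u *: gprod (enum_val u)) = c t * r%:R.
Proof.
rewrite mulmx_sumr linear_sum (bigD1 t) //= big1 ?addr0.
  by rewrite -scalemxAr mulVmx ?gprod_unitmx ?enum_val_powerset_sub // mxtraceZ mxtrace1.
move=> u neut; rewrite -scalemxAr mxtraceZ mxtrace_gprod_ratio ?mulr0 ?enum_val_powerset_sub //.
by rewrite (inj_eq enum_val_inj).
Qed.

Lemma gprod_mx_free : (0 < r)%N -> row_free gprod_mx.
Proof.
move=> r_gt0; rewrite -kermx_eq0; apply/rowV0P => w /sub_kermxP.
rewrite mulmx_gprod_mx => /eqP; rewrite mxvec_eq0 => /eqP w0.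
apply/rowP => t; have := mxtrace_gprod_coord (w 0) t.
rewrite w0 mulmx0 linear0 mxE => /esym/eqP; rewrite mulf_eq0 pnatr_eq0 (gtn_eqF r_gt0) orbF.
by move/eqP.
Qed.

Lemma hurwitz_radon_bound : (0 < r)%N -> (2 ^ #|A| <= r * r)%N.
Proof. by move=> r_gt0; rewrite -card_powerset -(eqP (gprod_mx_free r_gt0)) rank_leq_col. Qed.

Lemma commutant_scalar M : (2 ^ #|A| = r * r)%N ->
  (forall i, i \in A -> g i *m M = M *m g i) -> exists c, M = c%:M.
Proof.
move=> dimA gM; have r_gt0 : (0 < r)%N by move: (expn_gt0 2 #|A|); rewrite dimA muln_gt0 andbb.
have : (mxvec M <= gprod_mx)%MS.
  by apply: submx_full; rewrite /row_full (eqP (gprod_mx_free r_gt0)) card_powerset dimA.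
case/submxP => w; rewrite mulmx_gprod_mx => /(can_inj mxvecK) M_def.
(* every coordinate but that of the empty monomial is a vanishing trace *)
exists (\sum_(t : 'I_#|powerset A| | enum_val t == set0) w 0 t).
rewrite M_def raddf_sum [RHS]big_mkcond /=.
apply: eq_bigr => t _; have [->|neS0] := eqVneq (enum_val t) set0.
  by rewrite /gprod enum_set0 scalemx1.
have [i iA sepi] := gsign_separates (enum_val_powerset_sub t) (sub0set A) neS0.
suff -> : w 0 t = 0 by rewrite scale0r.
suff : w 0 t * r%:R = 0.
  by move/eqP; rewrite mulf_eq0 pnatr_eq0 (gtn_eqF r_gt0) orbF => /eqP.
rewrite -mxtrace_gprod_coord -M_def; apply: (mxtrace_anticomm0 (g_unitmx iA)).
rewrite /anticomm_mx mulmxA invmx_gprod_comm ?enum_val_powerset_sub // -scalemxAl -mulmxA gM //.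
by rewrite sepi /gsign cards0 in_set0 /= expr0 scaleN1r mulmxA.
Qed.

End CliffordMonomials.

Section StableSubspace.
Variables (F : numFieldType) (n k : nat) (g : 'I_k -> 'M[F]_n).
Variables (A : {set 'I_k}) (E : 'M[F]_n).
Hypothesis g_anticomm :
  forall i j, i \in A -> j \in A -> i != j -> anticomm_mx (g i) (g j).
Hypothesis A_even : ~~ odd #|A|.
Hypothesis E_stable : forall i, i \in A -> stablemx E (g i).
Hypothesis E_sqr : forall i, i \in A -> (E <= eigenspace (g i *m g i) (-1))%MS.

Local Notation V := (row_base E).
Local Notation gV := (fun i => conjmx V (g i)).

Lemma row_base_stable i : i \in A -> stablemx V (g i).
Proof. by move=> iA; rewrite stablemx_row_base E_stable. Qed.

Lemma conjmx_g_sqr i : i \in A -> gV i *m gV i = - 1%:M.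
Proof.
move=> iA; rewrite -conjmxM ?inE ?row_base_stable // -raddfN.
apply: conjmx_eigenvalue (row_base_free E).
by rewrite eq_row_base E_sqr.
Qed.

Lemma conjmx_g_anticomm i j : i \in A -> j \in A -> i != j ->
  anticomm_mx (gV i) (gV j).
Proof.
move=> iA jA neij; rewrite /anticomm_mx -!conjmxM ?inE ?row_base_stable // g_anticomm //.
by rewrite /conjmx mulmxN mulNmx.
Qed.

Lemma hurwitz_radon_bound_stable : E != 0 -> (2 ^ #|A| <= \rank E * \rank E)%N.
Proof.
rewrite -mxrank_eq0 -lt0n => rE_gt0.
exact: hurwitz_radon_bound conjmx_g_sqr conjmx_g_anticomm A_even rE_gt0.
Qed.

Lemma commutant_eigenspace_stable M : (2 ^ #|A| = \rank E * \rank E)%N ->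
  stablemx E M -> (forall i, i \in A -> g i *m M = M *m g i) ->
  exists c, (E <= eigenspace M c)%MS.
Proof.
move=> dimA EM gM; have VM : stablemx V M by rewrite stablemx_row_base.
have [c Mc] : exists c, conjmx V M = c%:M.
  apply: (commutant_scalar conjmx_g_sqr conjmx_g_anticomm A_even dimA) => i iA.
  by rewrite -!conjmxM ?inE ?row_base_stable // gM.
exists c; rewrite -eq_row_base; apply/eigenspaceP.
by rewrite -{1}(mulmxKpV VM) -/(conjmx V M) Mc mul_scalar_mx.
Qed.

End StableSubspace.

Section Adjoint.
Variables (C : numClosedFieldType) (n : nat).
Implicit Types M N : 'M[C]_n.

Lemma hermT1 : hermT (1%:M : 'M[C]_n) = 1%:M.
Proof. by apply/matrixP => i j; rewrite !mxE eq_sym; case: (i == j); rewrite ?conjC1 ?conjC0. Qed.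

Lemma hermTK M : hermT (hermT M) = M.
Proof. by apply/matrixP => i j; rewrite !mxE conjCK. Qed.

Lemma hermTB M N : hermT (M - N) = hermT M - hermT N.
Proof. by apply/matrixP => i j; rewrite !mxE rmorphB. Qed.

Lemma skew_hermitian_normalmx M : hermT M = - M -> M \is normalmx.
Proof.
move=> skewM; apply/normalmxP.
have -> : (M ^t* = hermT M)%sesqui by rewrite /hermT map_trmx.
by rewrite skewM mulmxN mulNmx.
Qed.

Lemma normalmx_sqr_eigenspace M : M \is normalmx -> M != 0 ->
  exists2 nu : C, nu != 0 & eigenspace (M *m M) nu != 0.
Proof.
move/orthomx_spectralP; set P := spectralmx M; set d := spectral_diag M => Md M0.
have PM : P *m M = diag_mx d *m P.
  by rewrite {1}Md !mulmxA mulmxV ?spectral_unit // mul1mx.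
have [t dt0 | d0] := pickP (fun t => d 0 t != 0); last first.
  case/eqP: M0; rewrite Md (_ : d = 0) ?linear0 ?mulmx0 ?mul0mx //.
  by apply/rowP => t; rewrite mxE; apply/eqP/negbFE/d0.
exists (d 0 t ^+ 2); first by rewrite expf_neq0.
apply: contraTneq isT => E0; have : (row t P <= eigenspace (M *m M) (d 0 t ^+ 2))%MS.
  apply/eigenspaceP; rewrite mulmxA -row_mul PM row_mul row_diag_mx -scalemxAl -rowE.
  by rewrite -scalemxAl -row_mul PM row_mul row_diag_mx -scalemxAl -rowE scalerA expr2.
rewrite E0 submx0 rowE mulmx_free_eq0 ?row_free_unit ?spectral_unit //.
by move/eqP/rowP/(_ t); rewrite !mxE !eqxx => /eqP; rewrite oner_eq0.
Qed.

End Adjoint.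

Lemma scalar_mx_inj (R : nzRingType) n : (0 < n)%N -> injective (@scalar_mx R n).
Proof. by move=> n_gt0 x y /matrixP/(_ (Ordinal n_gt0) (Ordinal n_gt0)); rewrite !mxE eqxx. Qed.

Lemma eigenspace_cap0 (F : numFieldType) n (f : 'M[F]_n) (a b : F) : a != b ->
  (eigenspace f a :&: eigenspace f b = 0)%MS.
Proof.
move=> neab; apply/eqP; rewrite -submx0; apply/rV_subP => v.
rewrite sub_capmx => /andP [/eigenspaceP va /eigenspaceP vb].
have : (a - b) *: v = 0 by rewrite scalerBl -va -vb subrr.
by move/eqP; rewrite scaler_eq0 subr_eq0 (negbTE neab) => /eqP ->; apply: sub0mx.
Qed.

Lemma half_combination (F : numFieldType) (V : lmodType F) (u v w : V) (cp cm : F) :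
  u *+ 2 = cp *: (v + w) + cm *: (v - w) ->
  u = ((cp + cm) / 2) *: v + ((cp - cm) / 2) *: w.
Proof.
move=> u2; have two_neq0 : (2 : F) != 0 by rewrite pnatr_eq0.
rewrite -[u](scalerK two_neq0) scaler_nat u2 !scalerDr !scalerN !scalerA.
by rewrite mulrDl mulrBl scalerDl scalerBl ![2^-1 * _]mulrC addrACA.
Qed.

Lemma sqr_combination (R : comPzRingType) n (P Q W : 'M[R]_n) (p q : R) :
  P *m P = - 1%:M -> Q *m Q = - 1%:M -> P *m Q = - W -> Q *m P = - W ->
  (p *: P + q *: Q) *m (p *: P + q *: Q) = - ((2 * p * q) *: W + (p ^+ 2 + q ^+ 2)%:M).
Proof.
move=> PP QQ PQ QP; rewrite !mulmxDl !mulmxDr -!scalemxAl -!scalemxAr !scalerA PP QQ PQ QP.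
by apply/matrixP => i j; rewrite !mxE; ring.
Qed.

Lemma sqr_mul_eqN1 (C : numClosedFieldType) (nu : C) : nu != 0 ->
  exists u : C, u ^+ 2 * nu = -1.
Proof. by move=> nu0; exists (sqrtC (- nu^-1)); rewrite sqrtCK mulNr mulVf. Qed.

(** * Normalized unitary-weight SSD codes *)

Section NormalizedSSD.
Variables (C : numClosedFieldType) (a : nat) (AI AQ : 'I_(2 * a) -> 'M[C]_(2 ^ a)).
Hypothesis a_ge2 : (2 <= a)%N.
Hypothesis SSD : unitary_weight_SSD AI AQ.
Hypothesis AI_normalized : normalized AI.
Variable i1 : 'I_(2 * a).
Hypothesis i1_0 : nat_of_ord i1 = 0%N.

Local Notation n := (2 ^ a)%N.
Local Notation X := AI.
Local Notation Y := AQ.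
Local Notation B := (AQ i1).

Lemma AI_i1 : X i1 = 1%:M. Proof. exact: AI_normalized. Qed.

Lemma n_gt0 : (0 < n)%N. Proof. exact: expn_gt0. Qed.

Lemma AQ_neq_sign_AI j (s : C) : s ^+ 2 = 1 -> Y j != s *: X j.
Proof.
move=> s2; apply/eqP => Yj; case: SSD => indep _ _ _.
have s_real : s \is Num.real.
  by move/eqP: s2; rewrite sqrf_eq1 => /orP [] /eqP ->; rewrite ?rpredN rpred1.
have := indep (fun i => if i == j then - s else 0) (fun i => if i == j then 1 else 0).
case/(_ _ _ _ j) => [i | i | | _]; first by case: (i == j); rewrite ?rpredN ?rpred0.
- by case: (i == j); rewrite ?rpred1 ?rpred0.
- rewrite (bigD1 j) //= big1 ?addr0 ?eqxx; first by rewrite Yj scale1r scaleNr addNr.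
  by move=> i /negbTE ->; rewrite !scale0r addr0.
by rewrite eqxx => /eqP; rewrite oner_eq0.
Qed.

Lemma SSD_relations i j : i != j ->
  [/\ hermT (X i) *m Y j + hermT (Y j) *m X i = 0,
      hermT (X i) *m X j + hermT (X j) *m X i = 0 &
      hermT (Y i) *m Y j + hermT (Y j) *m Y i = 0].
Proof. by case: SSD => _ _ rel _; apply: rel. Qed.

Lemma AI_skew l : l != i1 -> hermT (X l) = - X l.
Proof.
move=> l_i1; have i1_l : i1 != l by rewrite eq_sym.
have [_ rel _] := SSD_relations i1_l.
by apply/eqP; rewrite -addr_eq0 addrC -rel AI_i1 hermT1 mul1mx mulmx1.
Qed.

Lemma AQ_skew l : l != i1 -> hermT (Y l) = - Y l.
Proof.
move=> l_i1; have i1_l : i1 != l by rewrite eq_sym.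
have [rel _ _] := SSD_relations i1_l.
by apply/eqP; rewrite -addr_eq0 addrC -rel AI_i1 hermT1 mul1mx mulmx1.
Qed.

Lemma SSD_unitary i : hermT (X i) *m X i = 1%:M /\ hermT (Y i) *m Y i = 1%:M.
Proof. by case: SSD => _ unit _ _; apply: unit. Qed.

Lemma AI_sqr l : l != i1 -> X l *m X l = - 1%:M.
Proof. by move=> l_i1; have [XX _] := SSD_unitary l; rewrite -XX AI_skew // mulNmx opprK. Qed.

Lemma AQ_sqr l : l != i1 -> Y l *m Y l = - 1%:M.
Proof. by move=> l_i1; have [_ YY] := SSD_unitary l; rewrite -YY AQ_skew // mulNmx opprK. Qed.

Lemma AI_anticomm l m : l != i1 -> m != i1 -> l != m -> anticomm_mx (X l) (X m).
Proof.
move=> l_i1 m_i1 l_m; have [_ rel _] := SSD_relations l_m.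
by apply/eqP; rewrite -addr_eq0 -oppr_eq0 opprD -!mulNmx -!AI_skew // rel.
Qed.

Lemma AQ_anticomm l m : l != i1 -> m != i1 -> l != m -> anticomm_mx (Y l) (Y m).
Proof.
move=> l_i1 m_i1 l_m; have [_ _ rel] := SSD_relations l_m.
by apply/eqP; rewrite -addr_eq0 -oppr_eq0 opprD -!mulNmx -!AQ_skew // rel.
Qed.

Lemma AI_AQ_anticomm l m : l != i1 -> m != i1 -> l != m -> anticomm_mx (X l) (Y m).
Proof.
move=> l_i1 m_i1 l_m; have [rel _ _] := SSD_relations l_m.
by apply/eqP; rewrite -addr_eq0 -oppr_eq0 opprD -!mulNmx -AI_skew // -AQ_skew // rel.
Qed.

Lemma adjB_AI l : l != i1 -> hermT B *m X l = X l *m B.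
Proof.
move=> l_i1; have [rel _ _] := SSD_relations l_i1.
by apply/eqP; rewrite -subr_eq0 addrC -mulNmx -AI_skew // rel.
Qed.

Lemma adjB_AQ l : l != i1 -> hermT B *m Y l = Y l *m B.
Proof.
move=> l_i1; have i1_l : i1 != l by rewrite eq_sym.
have [_ _ rel] := SSD_relations i1_l.
by apply/eqP; rewrite -subr_eq0 -mulNmx -AQ_skew // rel.
Qed.

Lemma adjB_B : hermT B *m B = 1%:M.
Proof. by case: (SSD_unitary i1). Qed.

Lemma B_adjB : B *m hermT B = 1%:M.
Proof. exact: mulmx1C adjB_B. Qed.

Local Notation D := (B - hermT B).

Lemma adjB_comm_B_comm Z : hermT B *m Z = Z *m B -> B *m Z = Z *m hermT B.
Proof.
move=> BZ; rewrite -[B *m Z]mulmx1 -B_adjB !mulmxA -(mulmxA B Z) -BZ.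
by rewrite mulmxA B_adjB mul1mx.
Qed.

Lemma D_anticomm Z : hermT B *m Z = Z *m B -> anticomm_mx D Z.
Proof. by move=> BZ; rewrite /anticomm_mx mulmxBl (adjB_comm_B_comm BZ) BZ mulmxBr opprB. Qed.

Lemma D_skew : hermT D = - D.
Proof. by rewrite hermTB hermTK opprB. Qed.

Definition cliff (U : 'M[C]_n) i := if i == i1 then U else X i.

Lemma cliff_anticomm U : (forall l, l != i1 -> anticomm_mx U (X l)) ->
  forall i j, i \in [set: 'I_(2 * a)] -> j \in [set: 'I_(2 * a)] -> i != j ->
  anticomm_mx (cliff U i) (cliff U j).
Proof.
move=> UX i j _ _ i_j; rewrite /cliff.
have [i_i1 | i_i1] := eqVneq i i1; have [j_i1 | j_i1] := eqVneq j i1.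
- by rewrite i_i1 j_i1 eqxx in i_j.
- exact: UX.
- exact/anticomm_mxC/UX.
- exact: AI_anticomm.
Qed.

Lemma card_setT_even : ~~ odd #|[set: 'I_(2 * a)]|.
Proof. by rewrite cardsT card_ord oddM. Qed.

Lemma card_setT_dim : (2 ^ #|[set: 'I_(2 * a)]| = n * n)%N.
Proof. by rewrite cardsT card_ord mul2n -addnn expnD. Qed.

Lemma sub_eigenspace_N1 m (E : 'M[C]_(m, n)) : (E <= eigenspace (- 1%:M) (-1))%MS.
Proof. by apply/eigenspaceP; rewrite mulmxN mulmx1 scaleN1r. Qed.

Lemma D_sqr_scalar : D != 0 -> exists2 nu : C, nu != 0 & D *m D = nu%:M.
Proof.
move=> D0; have [nu nu0 E0] := normalmx_sqr_eigenspace (skew_hermitian_normalmx D_skew) D0.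
have [u u2nu] := sqr_mul_eqN1 nu0.
pose E := eigenspace (D *m D) nu.
have UX l : l != i1 -> anticomm_mx (u *: D) (X l).
  by move=> l_i1; apply/anticomm_mxZ/D_anticomm/adjB_AI.
have E_stable i : i \in [set: 'I_(2 * a)] -> stablemx E (cliff (u *: D) i).
  move=> _; apply: comm_mx_stable_eigenspace; rewrite /comm_mx /cliff.
  case: eqP => [_ | /eqP i_i1]; first by rewrite -scalemxAr -scalemxAl !mulmxA.
  have XD : anticomm_mx (X i) D by apply/anticomm_mxC/D_anticomm/adjB_AI.
  by rewrite (anticomm_mx_comm XD XD).
have E_sqr i : i \in [set: 'I_(2 * a)] ->
    (E <= eigenspace (cliff (u *: D) i *m cliff (u *: D) i) (-1))%MS.
  move=> _; rewrite /cliff; case: eqP => [_ | /eqP i_i1]; last first.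
    by rewrite AI_sqr ?sub_eigenspace_N1.
  apply/eigenspaceP; rewrite -scalemxAr -scalemxAl scalerA -expr2 -scalemxAr.
  by rewrite (eigenspaceP (submx_refl E)) scalerA u2nu.
have := hurwitz_radon_bound_stable (cliff_anticomm UX) card_setT_even E_stable E_sqr E0.
rewrite card_setT_dim => n2_le; have rE : \rank E = n.
  by apply/eqP; rewrite eqn_leq rank_leq_col -leq_sqr -!mulnn.
exists nu => //; have : (1%:M <= E)%MS by rewrite sub1mx /row_full rE.
by move/eigenspaceP; rewrite mul1mx scalemx1.
Qed.

Section NoAnticommutingRoot.
Variable U : 'M[C]_n.
Hypothesis U_sqr : U *m U = - 1%:M.
Hypothesis U_AI : forall l, l != i1 -> anticomm_mx U (X l).
Hypothesis U_AQ : forall l, l != i1 -> anticomm_mx U (Y l).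

Local Notation I := [set: 'I_(2 * a)].
Local Notation g := (cliff U).
Local Notation vol := (gprod g I).

Lemma cliff_sqr i : i \in I -> g i *m g i = - 1%:M.
Proof. by move=> _; rewrite /cliff; case: eqP => [// | /eqP i_i1]; apply: AI_sqr. Qed.

Lemma vol_unitmx : vol \in unitmx.
Proof. exact: (gprod_unitmx cliff_sqr (subsetT _)). Qed.

Lemma cliff_vol_anticomm i : anticomm_mx (g i) vol.
Proof.
rewrite /anticomm_mx (gprod_comm (cliff_anticomm U_AI) (in_setT i) (subsetT _)).
by rewrite /gsign in_setT (negbTE card_setT_even) expr1 scaleN1r.
Qed.

Lemma cliff_AI_anticomm i m : m != i1 -> i != m -> anticomm_mx (g i) (X m).
Proof.
move=> m_i1 i_m; rewrite /cliff; case: eqP => [_ | /eqP i_i1]; first exact: U_AI.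
exact: AI_anticomm.
Qed.

Lemma cliff_AQ_anticomm i m : m != i1 -> i != m -> anticomm_mx (g i) (Y m).
Proof.
move=> m_i1 i_m; rewrite /cliff; case: eqP => [_ | /eqP i_i1]; first exact: U_AQ.
exact: AI_AQ_anticomm.
Qed.

Lemma anticommutator_AQ_AI_scalar m : m != i1 ->
  exists h, Y m *m X m + X m *m Y m = h%:M.
Proof.
move=> m_i1; apply: (commutant_scalar cliff_sqr (cliff_anticomm U_AI) card_setT_even).
  exact: card_setT_dim.
move=> i _; rewrite mulmxDr mulmxDl; have [-> | i_m] := eqVneq i m.
  rewrite /cliff (negbTE m_i1) !mulmxA AI_sqr // -[Y m *m X m *m X m]mulmxA AI_sqr //.
  by rewrite mulNmx mulmxN mul1mx mulmx1 addrC.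
have gX := cliff_AI_anticomm m_i1 i_m; have gY := cliff_AQ_anticomm m_i1 i_m.
by rewrite (anticomm_mx_comm gY gX) (anticomm_mx_comm gX gY).
Qed.

Lemma AQ_add_AI_eq_invmx_vol m : m != i1 ->
  exists s t : C, t != 0 /\ Y m + s *: X m = t *: invmx vol.
Proof.
move=> m_i1; have [h Hh] := anticommutator_AQ_AI_scalar m_i1.
pose W := Y m + (h / 2) *: X m.
have gW i : anticomm_mx (g i) W.
  have [-> | i_m] := eqVneq i m; last first.
    by apply: anticomm_mxDZ; [apply: cliff_AQ_anticomm | apply: cliff_AI_anticomm].
  rewrite /cliff (negbTE m_i1); apply/eqP; rewrite -addr_eq0.
  rewrite /W mulmxDr mulmxDl -!scalemxAr -!scalemxAl AI_sqr //.
  by rewrite addrACA [X m *m Y m + _]addrC Hh -scalerDl -splitr scalerN scalemx1 addrN.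
have [t Wt] : exists t, W *m vol = t%:M.
  apply: (commutant_scalar cliff_sqr (cliff_anticomm U_AI) card_setT_even).
    exact: card_setT_dim.
  by move=> i _; rewrite mulmxA gW mulNmx -mulmxA cliff_vol_anticomm mulmxN opprK mulmxA.
have W_def : W = t *: invmx vol by rewrite -[W](mulmxK vol_unitmx) Wt mul_scalar_mx.
exists (h / 2), t; split=> //; apply: contraTneq isT => t0.
have Y_def : Y m = (- (h / 2)) *: X m.
  by apply/eqP; rewrite scaleNr -addr_eq0 -/W W_def t0 scale0r.
suff s2 : (- (h / 2)) ^+ 2 = 1 by have := AQ_neq_sign_AI m s2; rewrite Y_def eqxx.
apply: (@scalar_mx_inj _ _ n_gt0); apply: oppr_inj.
rewrite -[RHS](AQ_sqr m_i1) Y_def -scalemxAl -scalemxAr scalerA -expr2 AI_sqr //.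
by rewrite scalerN scalemx1.
Qed.

Lemma no_anticommuting_root : False.
Proof.
have j_lt : (1 < 2 * a)%N by lia.
have l_lt : (2 < 2 * a)%N by lia.
pose j := Ordinal j_lt; pose l := Ordinal l_lt.
have j_i1 : j != i1 by apply/eqP => /(congr1 val); rewrite /= i1_0.
have l_i1 : l != i1 by apply/eqP => /(congr1 val); rewrite /= i1_0.
have j_l : j != l by [].
have [sj [tj [tj0 Wj]]] := AQ_add_AI_eq_invmx_vol j_i1.
have [sl [tl [tl0 Wl]]] := AQ_add_AI_eq_invmx_vol l_i1.
have Yj_Wl : anticomm_mx (Y j) (Y l + sl *: X l).
  by apply: anticomm_mxDZ; [apply: AQ_anticomm | apply/anticomm_mxC/AI_AQ_anticomm].
have Xj_Wl : anticomm_mx (X j) (Y l + sl *: X l).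
  by apply: anticomm_mxDZ; [apply: AI_AQ_anticomm | apply: AI_anticomm].
(* both shifts are multiples of vol^-1, hence commute, yet they anticommute *)
have := anticomm_mxDZ sj (anticomm_mxC Yj_Wl) (anticomm_mxC Xj_Wl).
rewrite /anticomm_mx Wj Wl -!scalemxAl -!scalemxAr !scalerA [tj * tl]mulrC.
move/eqP; rewrite -addr_eq0 -scalerDl scaler_eq0 -mulr2n mulrn_eq0 mulf_eq0 /=.
rewrite (negbTE tj0) (negbTE tl0) /= => /eqP vol2_0.
have : invmx vol *m invmx vol \in unitmx by rewrite unitmx_mul unitmx_inv vol_unitmx.
by rewrite vol2_0 => /mxrank_unit; rewrite mxrank0 => n0; move: n_gt0; rewrite -n0.
Qed.

End NoAnticommutingRoot.

Lemma AQ_i1_hermitian : B = hermT B.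
Proof.
have [/subr0_eq // | D0] := eqVneq D 0.
have [nu nu0 DD] := D_sqr_scalar D0; have [u u2nu] := sqr_mul_eqN1 nu0.
exfalso; apply: (@no_anticommuting_root (u *: D)).
- by rewrite -scalemxAl -scalemxAr scalerA -expr2 DD scale_scalar_mx u2nu raddfN.
- by move=> l l_i1; apply/anticomm_mxZ/D_anticomm/adjB_AI.
- by move=> l l_i1; apply/anticomm_mxZ/D_anticomm/adjB_AQ.
Qed.

Lemma B_sqr : B *m B = 1%:M.
Proof. by rewrite {1}AQ_i1_hermitian adjB_B. Qed.

Lemma B_AI_comm l : l != i1 -> comm_mx B (X l).
Proof. by move=> l_i1; rewrite /comm_mx -adjB_AI // -AQ_i1_hermitian. Qed.

Lemma B_AQ_comm l : l != i1 -> comm_mx B (Y l).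
Proof. by move=> l_i1; rewrite /comm_mx -adjB_AQ // -AQ_i1_hermitian. Qed.

Local Notation Ep := (eigenspace B 1).
Local Notation Em := (eigenspace B (-1)).

Lemma addB_sub_Ep : ((1%:M + B)%R <= Ep)%MS.
Proof. by apply/eigenspaceP; rewrite mulmxDl mul1mx B_sqr scale1r addrC. Qed.

Lemma subB_sub_Em : ((1%:M - B)%R <= Em)%MS.
Proof. by apply/eigenspaceP; rewrite mulmxBl mul1mx B_sqr scaleN1r opprB. Qed.

Lemma Ep_neq0 : Ep != 0.
Proof.
apply: contraTneq isT => Ep0; have := addB_sub_Ep; rewrite Ep0 submx0 addrC addr_eq0.
by have := @AQ_neq_sign_AI i1 (-1); rewrite sqrrN expr1n AI_i1 scaleN1r => /(_ erefl) /negbTE ->.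
Qed.

Lemma Em_neq0 : Em != 0.
Proof.
apply: contraTneq isT => Em0; have := subB_sub_Em; rewrite Em0 submx0 subr_eq0 eq_sym.
by have := @AQ_neq_sign_AI i1 1; rewrite expr1n AI_i1 scale1r => /(_ erefl) /negbTE ->.
Qed.

Lemma rank_Ep_Em : (\rank Ep + \rank Em <= n)%N.
Proof.
rewrite -mxrank_disjoint_sum ?rank_leq_col // eigenspace_cap0 //.
by rewrite -addr_eq0 -mulr2n pnatr_eq0.
Qed.

Section OtherSymbol.
Variable j : 'I_(2 * a).
Hypothesis j_i1 : j != i1.

Local Notation Aj := [set l : 'I_(2 * a) | (l != i1) && (l != j)].

Lemma card_Aj : #|Aj| = (2 * (a - 1))%N.
Proof.
have -> : Aj = ~: [set i1; j] by apply/setP => l; rewrite !inE negb_or.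
by move: (cardsC [set i1; j]); rewrite cards2 eq_sym j_i1 card_ord; lia.
Qed.

Lemma Aj_anticomm l m : l \in Aj -> m \in Aj -> l != m -> anticomm_mx (X l) (X m).
Proof. by rewrite !inE => /andP [l_i1 _] /andP [m_i1 _]; apply: AI_anticomm. Qed.

Lemma Aj_even : ~~ odd #|Aj|.
Proof. by rewrite card_Aj oddM. Qed.

Lemma eigenspace_B_stable e l : l \in Aj -> stablemx (eigenspace B e) (X l).
Proof. by rewrite inE => /andP [l_i1 _]; apply/comm_mx_stable_eigenspace/B_AI_comm. Qed.

Lemma Aj_sqr m (E : 'M_(m, n)) l : l \in Aj -> (E <= eigenspace (X l *m X l) (-1))%MS.
Proof. by rewrite inE => /andP [l_i1 _]; rewrite AI_sqr ?sub_eigenspace_N1. Qed.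

Lemma rank_eigenspace_B e : e = 1 \/ e = -1 -> \rank (eigenspace B e) = (2 ^ (a - 1))%N.
Proof.
move=> e_pm.
have rank_ge e' : eigenspace B e' != 0 -> (2 ^ (a - 1) <= \rank (eigenspace B e'))%N.
  move=> E0; have := hurwitz_radon_bound_stable Aj_anticomm Aj_even (eigenspace_B_stable e').
  by move/(_ (Aj_sqr _) E0); rewrite card_Aj mulnC expnM mulnn leq_sqr.
have rank_sum : (\rank Ep + \rank Em <= 2 * 2 ^ (a - 1))%N.
  by rewrite subn1 -expnS prednK ?rank_Ep_Em // (leq_trans _ a_ge2).
have := rank_ge _ Ep_neq0; have := rank_ge _ Em_neq0; move: rank_sum.
by case: e_pm => ->; move: (\rank Ep) (\rank Em) (2 ^ (a - 1))%N => rp rm p; lia.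
Qed.

Lemma AI_AQ_span : exists p q : C, X j *m Y j = p%:M + q *: B.
Proof.
have B_M : comm_mx B (X j *m Y j).
  by rewrite /comm_mx mulmxA B_AI_comm // -mulmxA B_AQ_comm // mulmxA.
have M_eigen e : e = 1 \/ e = -1 -> exists c, (eigenspace B e <= eigenspace (X j *m Y j) c)%MS.
  move=> e_pm; apply: (commutant_eigenspace_stable Aj_anticomm Aj_even (eigenspace_B_stable e)).
  - exact: Aj_sqr.
  - by rewrite card_Aj mulnC expnM (rank_eigenspace_B e_pm) mulnn.
  - exact: comm_mx_stable_eigenspace.
  move=> l; rewrite inE => /andP [l_i1 l_j]; apply: anticomm_mx_comm.
    exact: AI_anticomm.
  exact: AI_AQ_anticomm.
have [cp /(submx_trans addB_sub_Ep) /eigenspaceP Mp] := M_eigen 1 (or_introl erefl).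
have [cm /(submx_trans subB_sub_Em) /eigenspaceP Mm] := M_eigen (-1) (or_intror erefl).
exists ((cp + cm) / 2), ((cp - cm) / 2); rewrite -scalemx1; apply: half_combination.
by rewrite -Mp -Mm -mulmxDl addrACA subrr addr0 mulmxDl mul1mx mulr2n.
Qed.

Lemma AQ_eq_sign : Y j = X j *m B \/ Y j = - (X j *m B).
Proof.
have [p [q M_def]] := AI_AQ_span.
have Y_def : Y j = (- p) *: X j + (- q) *: (X j *m B).
  have XM : X j *m (X j *m Y j) = - Y j by rewrite mulmxA AI_sqr // mulNmx mul1mx.
  by rewrite -[Y j]opprK -XM M_def mulmxDr mul_mx_scalar -scalemxAr opprD !scaleNr.
move: (- p) (- q) Y_def => {p q M_def} p q Y_def.
have XZ : X j *m (X j *m B) = - B by rewrite mulmxA AI_sqr // mulNmx mul1mx.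
have ZX : X j *m B *m X j = - B by rewrite -mulmxA B_AI_comm.
have ZZ : X j *m B *m (X j *m B) = - 1%:M by rewrite mulmxA ZX mulNmx B_sqr.
have Bs : (2 * p * q) *: B + (p ^+ 2 + q ^+ 2)%:M = 1%:M.
  by apply: oppr_inj; rewrite -(sqr_combination _ _ (AI_sqr j_i1) ZZ XZ ZX) -Y_def AQ_sqr.
have Bx : (2 * p * q) *: B = (1 - (p ^+ 2 + q ^+ 2))%:M.
  by rewrite raddfB /= -Bs addrK.
have [pq0 | pq_neq0] := eqVneq (2 * p * q) 0; last first.
  set c := (2 * p * q)^-1 * (1 - (p ^+ 2 + q ^+ 2)).
  have Bc : B = c *: X i1.
    by rewrite AI_i1 scalemx1 -scale_scalar_mx -Bx scalerA mulVf // scale1r.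
  have c2 : c ^+ 2 = 1.
    by apply: (scalar_mx_inj n_gt0); rewrite -B_sqr Bc AI_i1 scalemx1 -scalar_mxM expr2.
  by have := AQ_neq_sign_AI i1 c2; rewrite -Bc eqxx.
have : (1 - (p ^+ 2 + q ^+ 2))%:M = 0%:M :> 'M[C]_n by rewrite -Bx pq0 scale0r raddf0.
move/(scalar_mx_inj n_gt0)/eqP; rewrite subr_eq0 eq_sym => /eqP s1.
move/eqP: pq0; rewrite !mulf_eq0 pnatr_eq0 /= => /orP [/eqP p0 | /eqP q0].
  move: s1; rewrite p0 expr0n add0r => /eqP; rewrite sqrf_eq1 => /orP [] /eqP q_pm.
    by left; rewrite Y_def p0 q_pm scale0r add0r scale1r.
  by right; rewrite Y_def p0 q_pm scale0r add0r scaleN1r.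
move: s1; rewrite q0 expr0n addr0 /= => p2.
by have := AQ_neq_sign_AI j p2; rewrite Y_def q0 scale0r addr0 eqxx.
Qed.

End OtherSymbol.
End NormalizedSSD.

Theorem theorem2 (C : numClosedFieldType) (a : nat) (ha : (2 <= a)%N)
    (AI AQ : 'I_(2 * a) -> 'M[C]_(2 ^ a)) :
  unitary_weight_SSD AI AQ -> normalized AI ->
  forall i1 : 'I_(2 * a), nat_of_ord i1 = 0%N ->
    [/\ AQ i1 = hermT (AQ i1),
        AQ i1 *m AQ i1 = 1%:M &
        forall i : 'I_(2 * a), i != i1 ->
          AI i *m AQ i1 = AQ i1 *m AI i /\
          (AQ i = AI i *m AQ i1 \/ AQ i = - (AI i *m AQ i1))].
Proof.
move=> SSD AI_normalized i1 i1_0; split.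
- exact: (AQ_i1_hermitian ha SSD AI_normalized i1_0).
- exact: (B_sqr ha SSD AI_normalized i1_0).
move=> i i_i1; split; first by rewrite (B_AI_comm ha SSD AI_normalized i1_0 i_i1).
exact: (AQ_eq_sign ha SSD AI_normalized i1_0 i_i1).
Qed.
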